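(* Let $F$ be a field of characteristic zero, $k$ a positive integer, and $E$ the infinite-dimensional Grassmann algebra over $F$ graded by $\deg(\cdot)_{k^*}$. Let \[R=\begin{pmatrix} E & E\\ 0 & E\end{pmatrix}\] with the $\mathbb{Z}_2$-grading induced by that of $E$. Then $T_{\mathbb{Z}_2}(E)\,T_{\mathbb{Z}_2}(E)\subsetneq T_{\mathbb{Z}_2}(R)$.
   Context: $E$ is the unitary algebra generated by $e_1,e_2,\dots$ subject to $e_ie_j=-e_je_i$; it has basis $1$ and $e_{i_1}\cdots e_{i_s}$ ($i_1<\cdots<i_s$). The grading $\deg(\cdot)_{k^*}$ gives $e_i$ degree $1\in\mathbb{Z}_2$ for $i=1,\dots,k$ and degree $0$ otherwise, and $e_{i_1}\cdots e_{i_s}$ degree $\deg(e_{i_1})+\cdots+\deg(e_{i_s})$. $R$ is graded by letting its degree-$g$ component consist of the matrices all of whose entries have degree $g$. For a $\mathbb{Z}_2$-graded algebra, $T_{\mathbb{Z}_2}(\cdot)$ is its ideal of graded polynomial identities in the free algebra on countably many degree-$0$ and degree-$1$ variables; the product of ideals is the usual one. *)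

From HB Require Import structures.
From mathcomp Require Import all_boot all_order all_algebra.
From mathcomp Require Import finmap.
Set Implicit Arguments. Unset Strict Implicit. Unset Printing Implicit Defensive.
Import Order.TTheory GRing.Theory Num.Theory.
Local Open Scope ring_scope.
Local Open Scope fset_scope.

(* Free (unitary, associative, noncommutative) algebra F<X> on the     *)
(* Z2-graded variables X = {x_(g,i) | g : Z2 (= bool), i : nat}.        *)
(* A variable (g, i) has degree g.  A polynomial is a finitely          *)
(* supported coefficient function on words (monomials).                 *)
Definition var := (bool * nat)%type.
Definition word := seq var.

Definition fpoly (F : fieldType) := word -> F.

Definition finsupp_poly (F : fieldType) (f : fpoly F) : Prop :=
  exists s : seq word, forall w, w \notin s -> f w = 0.

Definition pmul (F : fieldType) (f g : fpoly F) : fpoly F :=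
  fun w => \sum_(i < (size w).+1) f (take i w) * g (drop i w).

(* hom g a  <->  a lies in the homogeneous component of degree g.      *)
Record galg (F : fieldType) := GAlg {
  gcar  : Type;
  gzero : gcar;
  gadd  : gcar -> gcar -> gcar;
  gscal : F -> gcar -> gcar;
  gone  : gcar;
  gmul  : gcar -> gcar -> gcar;
  ghom  : bool -> gcar -> Prop }.

Definition eval_word (F : fieldType) (A : galg F) (phi : var -> gcar A)
  (w : word) : gcar A := foldr (fun x acc => gmul (phi x) acc) (@gone F A) w.

(* evaluation of f, where s is a duplicate-free list of words containing *)
(* the support of f                                                       *)
Definition eval_poly (F : fieldType) (A : galg F) (phi : var -> gcar A)
  (s : seq word) (f : fpoly F) : gcar A :=
  foldr (fun w acc => gadd (gscal (f w) (eval_word phi w)) acc) (@gzero F A) s.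

Definition graded_subst (F : fieldType) (A : galg F) (phi : var -> gcar A) :=
  forall x : var, @ghom F A x.1 (phi x).

Definition TZ2 (F : fieldType) (A : galg F) (f : fpoly F) : Prop :=
  finsupp_poly f /\
  forall phi : var -> gcar A, graded_subst phi ->
  forall s : seq word, uniq s -> (forall w, w \notin s -> f w = 0) ->
  eval_poly phi s f = @gzero F A.

Definition all_seq (T : Type) (P : T -> Prop) (s : seq T) : Prop :=
  foldr (fun x acc => P x /\ acc) True s.

Definition ideal_prod (F : fieldType) (I J : fpoly F -> Prop) (h : fpoly F)
  : Prop :=
  exists s : seq (fpoly F * fpoly F),
    all_seq (fun p => I p.1 /\ J p.2) s /\
    forall w, h w = \sum_(p <- s) pmul p.1 p.2 w.

(* Generators e_i, i : nat (e_0, e_1, ... stand for the paper's        *)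
(* e_1, e_2, ...).  Basis: e_S = e_(i1)...e_(is), S = {i1<...<is}.      *)
(* An element is a finitely supported coefficient function on finite    *)
(* subsets of nat.                                                      *)
Definition Gr (F : fieldType) := {fset nat} -> F.

Definition finsupp_Gr (F : fieldType) (a : Gr F) : Prop :=
  exists s : seq {fset nat}, forall S, S \notin s -> a S = 0.

(* number of inversions when concatenating e_T and e_U *)
Definition ninv (T U : {fset nat}) : nat :=
  \sum_(i <- T) #|` [fset j in U | (j < i)%N]|.

(* e_T e_U = (-1)^(ninv T U) e_(T u U) if T, U disjoint, 0 otherwise *)
Definition Gr_mul (F : fieldType) (a b : Gr F) : Gr F :=
  fun S => \sum_(T <- fpowerset S)
             (-1) ^+ ninv T (S `\` T) * a T * b (S `\` T).

Definition Gr_add (F : fieldType) (a b : Gr F) : Gr F := fun S => (a S + b S)%R.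
Definition Gr_scal (F : fieldType) (c : F) (a : Gr F) : Gr F := fun S => (c * a S)%R.
Definition Gr_zero (F : fieldType) : Gr F := fun _ => 0.
Definition Gr_one (F : fieldType) : Gr F := fun S => if S == fset0 then 1 else 0.

(* grading deg_{k*}: e_i odd iff i is among the first k generators *)
Definition degk (k : nat) (S : {fset nat}) : bool :=
  odd #|` [fset i in S | (i < k)%N]|.

Definition Gr_hom (F : fieldType) (k : nat) (g : bool) (a : Gr F) : Prop :=
  finsupp_Gr a /\ forall S, a S != 0 -> degk k S = g.

Definition Ek (F : fieldType) (k : nat) : galg F :=
  @GAlg F (Gr F) (@Gr_zero F) (@Gr_add F) (@Gr_scal F) (@Gr_one F)
    (@Gr_mul F) (@Gr_hom F k).

(* R = upper triangular 2x2 matrices over E: (a, b, c) = [[a,b],[0,c]]  *)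
(* graded entrywise.                                                    *)
Definition UT (F : fieldType) := (Gr F * Gr F * Gr F)%type.

Definition UT_mul (F : fieldType) (x y : UT F) : UT F :=
  let: (a, b, c) := x in let: (a', b', c') := y in
  (Gr_mul a a', Gr_add (Gr_mul a b') (Gr_mul b c'), Gr_mul c c').
Definition UT_add (F : fieldType) (x y : UT F) : UT F :=
  let: (a, b, c) := x in let: (a', b', c') := y in
  (Gr_add a a', Gr_add b b', Gr_add c c').
Definition UT_scal (F : fieldType) (r : F) (x : UT F) : UT F :=
  let: (a, b, c) := x in (Gr_scal r a, Gr_scal r b, Gr_scal r c).
Definition UT_zero (F : fieldType) : UT F := (@Gr_zero F, @Gr_zero F, @Gr_zero F).
Definition UT_one (F : fieldType) : UT F := (@Gr_one F, @Gr_zero F, @Gr_one F).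
Definition UT_hom (F : fieldType) (k : nat) (g : bool) (x : UT F) : Prop :=
  let: (a, b, c) := x in [/\ Gr_hom k g a, Gr_hom k g b & Gr_hom k g c].

Definition Rk (F : fieldType) (k : nat) : galg F :=
  @GAlg F (UT F) (@UT_zero F) (@UT_add F) (@UT_scal F) (@UT_one F)
    (@UT_mul F) (@UT_hom F k).

From mathcomp Require Import all_boot all_algebra finmap ring.
From Stdlib Require Import FunctionalExtensionality.
Set Implicit Arguments. Unset Strict Implicit. Unset Printing Implicit Defensive.
Import GRing.Theory.
Local Open Scope fset_scope.
Local Open Scope ring_scope.

(** Both diagonal projections of R are algebra maps onto E, so if f and g are
  graded identities of E, then under any substitution whose diagonal entries
  are graded, f and g evaluate to strictly upper triangular matrices, whose
  product is zero.  Hence T(E)T(E) vanishes under such substitutions, in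
  particular under the graded substitutions of R.

  Conversely, a nonzero odd element of E involves one of the odd generators
  e_1, ..., e_k, so the monomial x_0 x_1 ... x_k in k+1 odd variables is an
  identity of R.  It is not in T(E)T(E): the substitution x_0 |-> E_12,
  x_i |-> e_i E_22 has graded diagonal entries and sends it to
  e_1 ... e_k E_12 <> 0. *)

(** * The Grassmann algebra *)

Lemma ninv_fsetUl (A B C : {fset nat}) : [disjoint A & B]%fset ->
  ninv (A `|` B) C = (ninv A C + ninv B C)%N.
Proof.
move=> dAB; rewrite /ninv (big_fsetID _ (mem A)) /=; congr (_ + _)%N.
  apply: eq_fbigl => x; rewrite !inE /=; case: (x \in A) => //; by rewrite andbF.
apply: eq_fbigl => x; rewrite !inE /=.
case xA: (x \in A) => /=; last by rewrite andbT.
by rewrite (negbTE (fdisjointP dAB x xA)).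
Qed.

Lemma ninv_fsetUr (A B C : {fset nat}) : [disjoint B & C]%fset ->
  ninv A (B `|` C) = (ninv A B + ninv A C)%N.
Proof.
move=> dBC; rewrite /ninv -big_split /=; apply: eq_bigr => i _.
rewrite -cardfsUI.
have -> : [fset j in B `|` C | (j < i)%N] =
          [fset j in B | (j < i)%N] `|` [fset j in C | (j < i)%N].
  by apply/fsetP => x; rewrite !inE /=; case: (x \in B); case: (x \in C); case: (x < i)%N.
have -> : [fset j in B | (j < i)%N] `&` [fset j in C | (j < i)%N] = fset0.
  apply/fsetP => x; have := fdisjointP dBC x; rewrite !inE /=.
  case: (x \in B); case: (x \in C); rewrite /=; by [|move=> /(_ isT)|rewrite andbF].
by rewrite cardfs0 addn0.
Qed.

Section FpowersetSums.
Variable V : nmodType.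
Implicit Types S T U : {fset nat}.

Lemma big_fpowersetD S U (G : {fset nat} -> V) :
  \sum_(T <- fpowerset (S `\` U)) G T =
  \sum_(T <- fpowerset S | [disjoint T & U]%fset) G T.
Proof.
by rewrite [RHS]big_fset_condE; apply: eq_fbigl => T; rewrite !inE fpowersetCE fpowersetE.
Qed.

Lemma big_fpowerset_sub S U (G : {fset nat} -> V) : U `<=` S ->
  \sum_(T <- fpowerset U) G T = \sum_(T <- fpowerset S | T `<=` U) G T.
Proof.
move=> US; rewrite [RHS]big_fset_condE; apply: eq_fbigl => T; rewrite !inE !fpowersetE.
by case TU: (T `<=` U); rewrite ?andbF // (fsubset_trans TU US).
Qed.

Lemma big_fpowerset_sup S U (G : {fset nat} -> V) : U `<=` S ->
  \sum_(T <- fpowerset S | U `<=` T) G T =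
  \sum_(B <- fpowerset S | [disjoint B & U]%fset) G (U `|` B).
Proof.
move=> US; rewrite -big_fpowersetD.
rewrite (_ : \sum_(B <- fpowerset (S `\` U)) G (U `|` B) =
   \sum_(T <- [fset U `|` B | B in fpowerset (S `\` U)]) G T); last first.
  rewrite [RHS]big_imfset //= => B B'.
  rewrite !fpowersetCE => /andP[_ dB] /andP[_ dB'] E.
  apply/fsetP => x; have := congr1 (fun X => x \in X) E; rewrite !inE /=.
  case xU: (x \in U) => //=.
  by rewrite (negbTE (fdisjointP_sym dB x xU)) (negbTE (fdisjointP_sym dB' x xU)).
rewrite [LHS]big_fset_condE; apply: eq_fbigl => T; rewrite !inE fpowersetE.
apply/andP/imfsetP => [[TS UT]|[B /=]].
  exists (T `\` U).
    rewrite /= fpowersetCE; apply/andP; split; first by rewrite fsubDset fsubsetU // TS orbT.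
    by apply/fdisjointP => x; rewrite !inE /= => /andP[].
  apply/fsetP => x; rewrite !inE /=.
  by case: (boolP (x \in U)) => //= /(fsubsetP UT) ->.
rewrite fpowersetCE => /andP[BS dB] ->; split; last exact: fsubsetUl.
by rewrite fsubUset US.
Qed.

End FpowersetSums.

Section GrassmannAlgebra.
Variable F : fieldType.
Implicit Types a b c : Gr F.
Implicit Types S T U : {fset nat}.


Lemma Gr_addA a b c : Gr_add a (Gr_add b c) = Gr_add (Gr_add a b) c.
Proof. by apply: functional_extensionality => S; rewrite /Gr_add addrA. Qed.

Lemma Gr_addACA a b c (d : Gr F) :
  Gr_add (Gr_add a b) (Gr_add c d) = Gr_add (Gr_add a c) (Gr_add b d).
Proof. by apply: functional_extensionality => S; rewrite /Gr_add addrACA. Qed.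

Lemma Gr_add0r a : Gr_add (@Gr_zero F) a = a.
Proof. by apply: functional_extensionality => S; rewrite /Gr_add add0r. Qed.

Lemma Gr_addr0 a : Gr_add a (@Gr_zero F) = a.
Proof. by apply: functional_extensionality => S; rewrite /Gr_add addr0. Qed.

Lemma Gr_scalDr r a b : Gr_scal r (Gr_add a b) = Gr_add (Gr_scal r a) (Gr_scal r b).
Proof. by apply: functional_extensionality => S; rewrite /Gr_add /Gr_scal mulrDr. Qed.

Lemma Gr_mulA a b c : Gr_mul (Gr_mul a b) c = Gr_mul a (Gr_mul b c).
Proof.
apply: functional_extensionality => S; rewrite /Gr_mul.
pose sgn T U := (-1 : F) ^+ ninv T U.
(* Both sides become sums over pairs (T1, B) of disjoint subsets of S, with
   factors a T1, b B and c (S - T1 - B); the signs then agree because ninv is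
   additive in each argument over disjoint unions. *)
transitivity (\sum_(T1 <- fpowerset S) \sum_(B <- fpowerset S | [disjoint B & T1]%fset)
   (sgn (T1 `|` B) (S `\` (T1 `|` B)) *
    (sgn T1 ((T1 `|` B) `\` T1) * a T1 * b ((T1 `|` B) `\` T1)) *
    c (S `\` (T1 `|` B)))).
  rewrite big_seq; under eq_bigr => T TS.
    rewrite fpowersetE in TS; rewrite (big_fpowerset_sub _ TS) mulr_sumr mulr_suml.
    over.
  rewrite /= -big_seq (exchange_big_dep xpredT) //=.
  rewrite big_seq [RHS]big_seq; apply: eq_bigr => T1; rewrite fpowersetE => T1S.
  exact: (big_fpowerset_sup (fun T => sgn T (S `\` T) *
    (sgn T1 (T `\` T1) * a T1 * b (T `\` T1)) * c (S `\` T)) T1S).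
symmetry; under eq_bigr => U _ do rewrite (big_fpowersetD S U) mulr_sumr.
apply: eq_big_seq => T1; rewrite fpowersetE => T1S.
rewrite big_seq_cond [RHS]big_seq_cond; apply: eq_bigr => B /andP[BS dB].
rewrite fpowersetE in BS.
have -> : (T1 `|` B) `\` T1 = B.
  apply/fsetP => x; rewrite !inE /=.
  case: (boolP (x \in B)) => xB; last by case: (x \in T1).
  by rewrite (fdisjointP dB x xB) orbT.
have -> : S `\` (T1 `|` B) = (S `\` T1) `\` B by rewrite fsetDDl.
have {1}-> : S `\` T1 = B `|` ((S `\` T1) `\` B).
  apply/fsetP => x; rewrite !inE /=; case: (boolP (x \in B)) => xB //=.
  by rewrite (fdisjointP dB x xB) (fsubsetP BS x xB).
have dBW : [disjoint B & (S `\` T1) `\` B]%fset.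
  by apply/fdisjointP => x xB; rewrite !inE /= xB.
rewrite /sgn ninv_fsetUl 1?fdisjoint_sym // ninv_fsetUr // !exprD.
move: ((-1 : F) ^+ ninv T1 B) ((-1 : F) ^+ ninv T1 _) ((-1 : F) ^+ ninv B _).
by move: (a T1) (b B) (c _) => ? ? ? ? ? ?; ring.
Qed.

Lemma Gr_mulDl a b c : Gr_mul (Gr_add a b) c = Gr_add (Gr_mul a c) (Gr_mul b c).
Proof.
apply: functional_extensionality => S; rewrite /Gr_mul /Gr_add -big_split /=.
by apply: eq_bigr => T _; rewrite mulrDr mulrDl.
Qed.

Lemma Gr_mulDr a b c : Gr_mul a (Gr_add b c) = Gr_add (Gr_mul a b) (Gr_mul a c).
Proof.
apply: functional_extensionality => S; rewrite /Gr_mul /Gr_add -big_split /=.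
by apply: eq_bigr => T _; rewrite mulrDr.
Qed.

Lemma Gr_mulZl r a b : Gr_mul (Gr_scal r a) b = Gr_scal r (Gr_mul a b).
Proof.
apply: functional_extensionality => S; rewrite /Gr_mul /Gr_scal mulr_sumr.
by apply: eq_bigr => T _; rewrite mulrCA !mulrA.
Qed.

Lemma Gr_mulZr r a b : Gr_mul a (Gr_scal r b) = Gr_scal r (Gr_mul a b).
Proof.
apply: functional_extensionality => S; rewrite /Gr_mul /Gr_scal mulr_sumr.
by apply: eq_bigr => T _; rewrite mulrCA.
Qed.

Lemma Gr_mul0l a : Gr_mul (@Gr_zero F) a = @Gr_zero F.
Proof.
apply: functional_extensionality => S.
by rewrite /Gr_mul big1 // => T _; rewrite mulr0 mul0r.
Qed.

Lemma Gr_mul0r a : Gr_mul a (@Gr_zero F) = @Gr_zero F.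
Proof.
apply: functional_extensionality => S.
by rewrite /Gr_mul big1 // => T _; rewrite mulr0.
Qed.

Lemma Gr_mul1l a : Gr_mul (@Gr_one F) a = a.
Proof.
apply: functional_extensionality => S; rewrite /Gr_mul /Gr_one.
rewrite (big_fsetD1 fset0) /=; last by rewrite fpowersetE fsub0set.
rewrite /ninv big_seq_fset0 fsetD0 expr0 !mul1r big1_fset ?addr0 // => T.
by rewrite !inE => /andP[/negbTE -> _] _; rewrite mulr0 mul0r.
Qed.

End GrassmannAlgebra.

(** * Polynomials and their evaluations *)

Definition covers (F : fieldType) (s : seq word) (f : fpoly F) :=
  uniq s /\ forall w, w \notin s -> f w = 0.

Definition monomial (F : fieldType) (w : word) : fpoly F :=
  fun u => if u == w then 1 else 0.

Lemma sub_all_seq (T : Type) (P Q : T -> Prop) (l : seq T) :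
  (forall x, P x -> Q x) -> all_seq P l -> all_seq Q l.
Proof. by move=> PQ; elim: l => //= x l IH [/PQ Hx /IH]. Qed.

Lemma all_seq_and (T : Type) (P Q : T -> Prop) (l : seq T) :
  all_seq P l -> all_seq Q l -> all_seq (fun x => P x /\ Q x) l.
Proof. by elim: l => //= x l IH [Px Pl] [Qx Ql]; split; [split|apply: IH]. Qed.

Lemma big_all_seq_eq0 (V : nmodType) (T : Type) (l : seq T) (G : T -> V) :
  all_seq (fun x => G x = 0) l -> \sum_(x <- l) G x = 0.
Proof.
by elim: l => [|x l IH] /=; rewrite ?big_nil // big_cons => -[-> /IH ->]; rewrite addr0.
Qed.

Section Covers.
Variable F : fieldType.
Implicit Types (f g h : fpoly F) (s t : seq word).

Lemma covers_undup f s : (forall w, w \notin s -> f w = 0) -> covers (undup s) f.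
Proof. by move=> fs; split=> [|w]; rewrite ?undup_uniq // mem_undup; exact: fs. Qed.

Lemma finsupp_covers f : finsupp_poly f -> exists s, covers s f.
Proof. by case=> s /covers_undup cs; exists (undup s). Qed.

Lemma sum_pick (T : eqType) (t : seq T) (x : T) (X : T -> F) :
  uniq t -> x \in t -> \sum_(w <- t) (if x == w then 1 else 0) * X w = X x.
Proof.
move=> ut xt; rewrite (bigD1_seq x) //= eqxx mul1r big1 ?addr0 // => w.
by rewrite eq_sym => /negbTE ->; rewrite mul0r.
Qed.

Lemma covers_pick f s x : covers s f ->
  f x = \sum_(u <- s) (if u == x then f u else 0).
Proof.
move=> [us fs]; case: (boolP (x \in s)) => xs.
  by rewrite (bigD1_seq x) //= eqxx big1 ?addr0 // => w /negbTE ->.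
by rewrite fs // big1 // => u _; case: eqP => // ->; exact: fs.
Qed.

Lemma sum_covers_sub (X : word -> F) f s t : covers s f -> uniq t -> {subset s <= t} ->
  \sum_(w <- s) f w * X w = \sum_(w <- t) f w * X w.
Proof.
move=> [us fs] ut st; rewrite [RHS](bigID (mem s)) /=.
rewrite [X in (_ + X)%R]big1 ?addr0; last by move=> w /fs ->; rewrite mul0r.
rewrite -[RHS]big_filter; apply: perm_big; apply: uniq_perm; rewrite ?filter_uniq //.
by move=> w; rewrite mem_filter; case: (boolP (w \in s)) => // /st ->.
Qed.

Lemma sum_covers (X : word -> F) f s t : covers s f -> covers t f ->
  \sum_(w <- s) f w * X w = \sum_(w <- t) f w * X w.
Proof.
move=> cs ct; have ust := undup_uniq (s ++ t).
rewrite (sum_covers_sub X cs ust) ?(sum_covers_sub X ct ust) // => w wst;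
  by rewrite mem_undup mem_cat wst ?orbT.
Qed.

Lemma pmul_covers f g sf sg : covers sf f -> covers sg g ->
  covers (undup [seq u ++ v | u <- sf, v <- sg]) (pmul f g).
Proof.
move=> [_ f0] [_ g0]; apply: covers_undup => w wn; rewrite /pmul big1 // => i _.
case: (boolP (take i w \in sf)) => tf; last by rewrite f0 // mul0r.
case: (boolP (drop i w \in sg)) => dg; last by rewrite g0 // mulr0.
by case/negP: wn; apply/allpairsP; exists (take i w, drop i w); rewrite /= cat_take_drop.
Qed.

Lemma pmul_finsupp f g : finsupp_poly f -> finsupp_poly g ->
  exists t, covers t (pmul f g).
Proof.
move=> /finsupp_covers[sf cf] /finsupp_covers[sg cg].
by eexists; exact: pmul_covers cf cg.
Qed.

Lemma sum_split_eq (w u v : word) :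
  \sum_(i < (size w).+1) (if (u == take i w) && (v == drop i w) then 1 else 0 : F)
  = if u ++ v == w then 1 else 0.
Proof.
case: eqP => [<-|ne].
  have su : (size u < (size (u ++ v)).+1)%N by rewrite size_cat ltnS leq_addr.
  rewrite (bigD1 (Ordinal su)) //= take_size_cat // drop_size_cat // !eqxx big1 ?addr0 //.
  move=> i /eqP ne; case: eqP => // Eu; case: ne; apply: val_inj => /=.
  by have := congr1 size Eu; rewrite size_takel // -ltnS (ltn_ord i).
rewrite big1 // => i _; case: ifP => // /andP[/eqP Eu /eqP Ev].
by case: ne; rewrite Eu Ev cat_take_drop.
Qed.

Lemma sum_pmul f g sf sg (X : word -> F) : covers sf f -> covers sg g ->
  \sum_(w <- undup [seq u ++ v | u <- sf, v <- sg]) pmul f g w * X w =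
  \sum_(u <- sf) \sum_(v <- sg) f u * g v * X (u ++ v).
Proof.
move=> cf cg; set t := undup _.
transitivity (\sum_(w <- t) \sum_(u <- sf) \sum_(v <- sg)
   (f u * g v * ((if u ++ v == w then 1 else 0) * X w))).
  apply: eq_bigr => w _; rewrite /pmul.
  under eq_bigr => i _ do
    rewrite (covers_pick (take i w) cf) (covers_pick (drop i w) cg) mulr_suml.
  under eq_bigr => i _ do under eq_bigr => u _ do rewrite mulr_sumr.
  rewrite mulr_suml; under eq_bigr => i _ do rewrite mulr_suml.
  rewrite exchange_big /=; apply: eq_bigr => u _.
  under eq_bigr => i _ do rewrite mulr_suml.
  rewrite exchange_big /=; apply: eq_bigr => v _.
  rewrite -sum_split_eq mulr_suml mulr_sumr; apply: eq_bigr => i _.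
  rewrite [u == _]eq_sym [v == _]eq_sym.
  by case: (take i w == u); case: (drop i w == v) => /=; ring.
rewrite exchange_big /= big_seq [RHS]big_seq; apply: eq_bigr => u us.
rewrite exchange_big /= big_seq [RHS]big_seq; apply: eq_bigr => v vs.
rewrite -mulr_sumr sum_pick ?undup_uniq //.
by rewrite /t mem_undup; apply/allpairsP; exists (u, v).
Qed.

Lemma ideal_prod_covers (I J : fpoly F -> Prop) ps :
  (forall f, I f -> finsupp_poly f) -> (forall f, J f -> finsupp_poly f) ->
  all_seq (fun p => I p.1 /\ J p.2) ps ->
  exists L : seq word, all_seq (fun p => forall w, w \notin L -> pmul p.1 p.2 w = 0) ps.
Proof.
move=> If Jf; elim: ps => [|p ps IH] /=; first by exists [::].
case=> [[/If fp /Jf gp] /IH [L Lz]].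
have [t [_ tz]] := pmul_finsupp fp gp.
exists (t ++ L); split=> [w|]; first by rewrite mem_cat negb_or => /andP[/tz].
by apply: sub_all_seq Lz => q Lq w; rewrite mem_cat negb_or => /andP[_ /Lq].
Qed.

Lemma ideal_prod_finsupp (I J : fpoly F -> Prop) h :
  (forall f, I f -> finsupp_poly f) -> (forall f, J f -> finsupp_poly f) ->
  ideal_prod I J h -> finsupp_poly h.
Proof.
move=> If Jf [ps [Ips hE]]; have [L Lz] := ideal_prod_covers If Jf Ips.
exists L => w wL; rewrite hE; apply: big_all_seq_eq0.
by apply: sub_all_seq Lz => p /(_ w wL).
Qed.

End Covers.

Definition glincomb (F : fieldType) (A : galg F) (s : seq word) (c : word -> F)
  (G : word -> gcar A) : gcar A :=
  foldr (fun w acc => gadd (gscal (c w) (G w)) acc) (gzero A) s.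

(* A unital associative algebra structure on A together with a faithful family
   of linear coordinates, through which identities in A reduce to identities
   between finite sums in F. *)
Record coord_alg (F : fieldType) (A : galg F) := CoordAlg {
  coord_index : Type;
  coord : gcar A -> coord_index -> F;
  coord_inj : forall x y, (forall i, coord x i = coord y i) -> x = y;
  coordD : forall x y i, coord (gadd x y) i = coord x i + coord y i;
  coordZ : forall c x i, coord (gscal c x) i = c * coord x i;
  coord0 : forall i, coord (gzero A) i = 0;
  gmulDl : forall x y z : gcar A, gmul (gadd x y) z = gadd (gmul x z) (gmul y z);
  gmulDr : forall x y z : gcar A, gmul x (gadd y z) = gadd (gmul x y) (gmul x z);
  gmulZl : forall c (x y : gcar A), gmul (gscal c x) y = gscal c (gmul x y);
  gmulZr : forall c (x y : gcar A), gmul x (gscal c y) = gscal c (gmul x y);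
  gmulA : forall x y z : gcar A, gmul (gmul x y) z = gmul x (gmul y z);
  gmul1l : forall x : gcar A, gmul (gone A) x = x }.

Arguments coord {F A} c0.
Arguments coord_inj {F A} c0 {x y}.

Section CoordAlgebra.
Variables (F : fieldType) (A : galg F) (cA : coord_alg A).
Implicit Types (phi : var -> gcar A) (f g h : fpoly F) (x y : gcar A).
Implicit Types (c : word -> F) (G : word -> gcar A) (s : seq word).

Local Notation co := (coord cA).

Lemma gscal0 x : gscal 0 x = gzero A.
Proof. by apply: (coord_inj cA) => i; rewrite coordZ coord0 mul0r. Qed.

Lemma gmul0l x : gmul (gzero A) x = gzero A.
Proof. by rewrite -{1}(gscal0 (gzero A)) (gmulZl cA) gscal0. Qed.

Lemma gmul0r x : gmul x (gzero A) = gzero A.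
Proof. by rewrite -{1}(gscal0 (gzero A)) (gmulZr cA) gscal0. Qed.

Lemma coord_glincomb s c G i :
  co (glincomb s c G) i = \sum_(w <- s) c w * co (G w) i.
Proof.
elim: s => [|w s IH] /=; first by rewrite big_nil coord0.
by rewrite big_cons coordD coordZ IH.
Qed.

Lemma glincomb_mull s c G y :
  gmul (glincomb s c G) y = glincomb s c (fun w => gmul (G w) y).
Proof. by elim: s => [|w s IH] /=; rewrite ?gmul0l // (gmulDl cA) (gmulZl cA) IH. Qed.

Lemma glincomb_mulr s c G y :
  gmul y (glincomb s c G) = glincomb s c (fun w => gmul y (G w)).
Proof. by elim: s => [|w s IH] /=; rewrite ?gmul0r // (gmulDr cA) (gmulZr cA) IH. Qed.

Lemma eval_word_cat phi u v :
  eval_word phi (u ++ v) = gmul (eval_word phi u) (eval_word phi v).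
Proof. by elim: u => [|x u IH] /=; rewrite ?(gmul1l cA) // [eval_word _ _]/= IH (gmulA cA). Qed.

Lemma coord_eval_poly phi s f i :
  co (eval_poly phi s f) i = \sum_(w <- s) f w * co (eval_word phi w) i.
Proof. exact: coord_glincomb. Qed.

Lemma eval_monomial phi s w : uniq s -> w \in s ->
  eval_poly phi s (monomial F w) = eval_word phi w.
Proof.
move=> us ws; apply: (coord_inj cA) => i; rewrite coord_eval_poly.
by under eq_bigr => u _ do rewrite /monomial eq_sym; rewrite sum_pick.
Qed.

Lemma monomial_TZ2 w :
  (forall phi, graded_subst phi -> eval_word phi w = gzero A) ->
  TZ2 A (monomial F w).
Proof.
move=> w0; split; first by exists [:: w] => u; rewrite inE /monomial => /negbTE ->.
move=> phi gphi s us sw; rewrite eval_monomial ?w0 //.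
by apply: contraT => /sw; rewrite /monomial eqxx => /eqP; rewrite oner_eq0.
Qed.

Lemma eval_pmul phi f g sf sg s :
  covers sf f -> covers sg g -> covers s (pmul f g) ->
  eval_poly phi s (pmul f g) = gmul (eval_poly phi sf f) (eval_poly phi sg g).
Proof.
move=> cf cg cs; apply: (coord_inj cA) => i; rewrite coord_eval_poly.
rewrite (sum_covers _ cs (pmul_covers cf cg)) sum_pmul //.
rewrite [eval_poly _ sf f]/eval_poly -/(glincomb sf f _) glincomb_mull coord_glincomb.
apply: eq_bigr => u _; rewrite -/(glincomb sg g _) glincomb_mulr coord_glincomb mulr_sumr.
by apply: eq_bigr => v _; rewrite eval_word_cat mulrA.
Qed.

Lemma eval_ideal_prod_eq0 (I J : fpoly F -> Prop) phi h s :
  (forall f, I f -> finsupp_poly f) -> (forall f, J f -> finsupp_poly f) ->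
  (forall f g sf sg, I f -> J g -> covers sf f -> covers sg g ->
     gmul (eval_poly phi sf f) (eval_poly phi sg g) = gzero A) ->
  ideal_prod I J h -> covers s h -> eval_poly phi s h = gzero A.
Proof.
move=> If Jf IJ0 [ps [Ips hE]] cs.
have [L Lz] := ideal_prod_covers If Jf Ips.
set L' := undup (s ++ L).
have cL : covers L' h.
  by apply: covers_undup => w; rewrite mem_cat negb_or => /andP[ws _]; case: cs => _ ->.
apply: (coord_inj cA) => i; rewrite coord0 coord_eval_poly (sum_covers _ cs cL).
under eq_bigr => w _ do rewrite hE mulr_suml.
rewrite exchange_big /=; apply: big_all_seq_eq0.
apply: sub_all_seq (all_seq_and Ips Lz) => -[f g] [[If' Jg] Lp] /=.
have [sf cf] := finsupp_covers (If _ If').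
have [sg cg] := finsupp_covers (Jf _ Jg).
have cp : covers L' (pmul f g).
  by apply: covers_undup => w; rewrite mem_cat negb_or => /andP[_ wL]; exact: Lp.
by rewrite -coord_eval_poly (eval_pmul _ cf cg cp) IJ0 ?coord0.
Qed.

End CoordAlgebra.

(** * Upper triangular matrices over the Grassmann algebra *)

Section UpperTriangular.
Variable F : fieldType.
Implicit Types x y z : UT F.

Definition UT_coord x (i : nat * {fset nat}) : F :=
  let: (n, U) := i in if n == 0%N then x.1.1 U else if n == 1%N then x.1.2 U else x.2 U.

Lemma UT_coord_inj x y : (forall i, UT_coord x i = UT_coord y i) -> x = y.
Proof.
case: x => [[a b] c]; case: y => [[a' b'] c'] xy.
by congr (_, _, _); apply: functional_extensionality => S;
  [exact: (xy (0, S)) | exact: (xy (1, S)) | exact: (xy (2, S))].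
Qed.

Lemma UT_coordD x y i : UT_coord (UT_add x y) i = UT_coord x i + UT_coord y i.
Proof. by case: x => [[a b] c]; case: y => [[a' b'] c']; case: i => [[|[|n]] U]. Qed.

Lemma UT_coordZ r x i : UT_coord (UT_scal r x) i = r * UT_coord x i.
Proof. by case: x => [[a b] c]; case: i => [[|[|n]] U]. Qed.

Lemma UT_coord0 i : UT_coord (UT_zero F) i = 0.
Proof. by case: i => [[|[|n]] U]. Qed.

Lemma UT_mulDl x y z : UT_mul (UT_add x y) z = UT_add (UT_mul x z) (UT_mul y z).
Proof.
case: x => [[a b] c]; case: y => [[a' b'] c']; case: z => [[a'' b''] c''] /=.
by rewrite !Gr_mulDl Gr_addACA.
Qed.

Lemma UT_mulDr x y z : UT_mul x (UT_add y z) = UT_add (UT_mul x y) (UT_mul x z).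
Proof.
case: x => [[a b] c]; case: y => [[a' b'] c']; case: z => [[a'' b''] c''] /=.
by rewrite !Gr_mulDr Gr_addACA.
Qed.

Lemma UT_mulZl r x y : UT_mul (UT_scal r x) y = UT_scal r (UT_mul x y).
Proof.
case: x => [[a b] c]; case: y => [[a' b'] c'] /=.
by rewrite !Gr_mulZl Gr_scalDr.
Qed.

Lemma UT_mulZr r x y : UT_mul x (UT_scal r y) = UT_scal r (UT_mul x y).
Proof.
case: x => [[a b] c]; case: y => [[a' b'] c'] /=.
by rewrite !Gr_mulZr Gr_scalDr.
Qed.

Lemma UT_mulA x y z : UT_mul (UT_mul x y) z = UT_mul x (UT_mul y z).
Proof.
case: x => [[a b] c]; case: y => [[a' b'] c']; case: z => [[a'' b''] c''] /=.
by rewrite !Gr_mulDl !Gr_mulDr !Gr_mulA Gr_addA.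
Qed.

Lemma UT_mul1l x : UT_mul (UT_one F) x = x.
Proof. by case: x => [[a b] c] /=; rewrite !Gr_mul1l Gr_mul0l Gr_addr0. Qed.

Definition UT_coord_alg (k : nat) : coord_alg (Rk F k) :=
  @CoordAlg F (Rk F k) _ UT_coord UT_coord_inj UT_coordD UT_coordZ UT_coord0
    UT_mulDl UT_mulDr UT_mulZl UT_mulZr UT_mulA UT_mul1l.

End UpperTriangular.

Section DiagonalSubstitutions.
Variables (F : fieldType) (k : nat).
Implicit Types (phi : var -> UT F) (s : seq word) (f h : fpoly F).

Lemma eval_word_UT11 phi w :
  (eval_word (A := Rk F k) phi w).1.1 = eval_word (A := Ek F k) (fun x => (phi x).1.1) w.
Proof.
elim: w => [|x w IH] //=; rewrite -IH.
by case: (phi x) => [[? ?] ?]; case: (eval_word _ _) => [[? ?] ?].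
Qed.

Lemma eval_word_UT22 phi w :
  (eval_word (A := Rk F k) phi w).2 = eval_word (A := Ek F k) (fun x => (phi x).2) w.
Proof.
elim: w => [|x w IH] //=; rewrite -IH.
by case: (phi x) => [[? ?] ?]; case: (eval_word _ _) => [[? ?] ?].
Qed.

Lemma eval_poly_UT11 phi s f :
  (eval_poly (A := Rk F k) phi s f).1.1 = eval_poly (A := Ek F k) (fun x => (phi x).1.1) s f.
Proof.
elim: s => [|w s IH] //=; rewrite -IH -eval_word_UT11.
by case: (eval_word _ _) => [[? ?] ?]; case: (eval_poly _ _ _) => [[? ?] ?].
Qed.

Lemma eval_poly_UT22 phi s f :
  (eval_poly (A := Rk F k) phi s f).2 = eval_poly (A := Ek F k) (fun x => (phi x).2) s f.
Proof.
elim: s => [|w s IH] //=; rewrite -IH -eval_word_UT22.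
by case: (eval_word _ _) => [[? ?] ?]; case: (eval_poly _ _ _) => [[? ?] ?].
Qed.

Lemma UT_mul_strict_upper (x y : UT F) :
  x.1.1 = @Gr_zero F -> x.2 = @Gr_zero F -> y.1.1 = @Gr_zero F -> y.2 = @Gr_zero F ->
  UT_mul x y = UT_zero F.
Proof.
case: x => [[a b] c]; case: y => [[a' b'] c'] /= -> -> -> ->.
by rewrite !Gr_mul0l Gr_mul0r Gr_add0r.
Qed.

Lemma eval_ideal_prod_UT phi h s :
  graded_subst (A := Ek F k) (fun x => (phi x).1.1) ->
  graded_subst (A := Ek F k) (fun x => (phi x).2) ->
  ideal_prod (TZ2 (Ek F k)) (TZ2 (Ek F k)) h -> covers s h ->
  eval_poly (A := Rk F k) phi s h = UT_zero F.
Proof.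
move=> g11 g22; apply: (eval_ideal_prod_eq0 (UT_coord_alg F k)); try by move=> f [].
move=> f g sf sg [_ Tf] [_ Tg] [usf sff] [usg sgg].
by apply: UT_mul_strict_upper; rewrite ?eval_poly_UT11 ?eval_poly_UT22 ?Tf ?Tg.
Qed.

Lemma ideal_prod_sub_TZ2_UT h :
  ideal_prod (TZ2 (Ek F k)) (TZ2 (Ek F k)) h -> TZ2 (Rk F k) h.
Proof.
move=> Ih; split; first by apply: ideal_prod_finsupp Ih; move=> f [].
move=> phi gphi s us sh; apply: eval_ideal_prod_UT Ih _ => //;
  by move=> x; case: (phi x) (gphi x) => [[? ?] ?] [].
Qed.

End DiagonalSubstitutions.

(** * The odd monomial x_0 x_1 ... x_k *)

Section OddMonomial.
Variables (F : fieldType) (k : nat).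
Implicit Types (a b : Gr F) (S T U : {fset nat}).

Definition kcount S := #|` [fset i in S | (i < k)%N]|.

Definition kcount_ge n a := forall S, a S != 0 -> (n <= kcount S)%N.

Lemma kcount_sub T S : T `<=` S -> kcount S = (kcount T + kcount (S `\` T))%N.
Proof.
move=> TS; rewrite /kcount -cardfsUI.
have -> : [fset i in T | (i < k)%N] `&` [fset i in S `\` T | (i < k)%N] = fset0.
  by apply/fsetP => x; rewrite !inE /=; case: (x \in T); rewrite ?andbF.
rewrite cardfs0 addn0; congr #|` _|; apply/fsetP => x; rewrite !inE /=.
case xT: (x \in T) => //=.
by rewrite orbF; case: (x < k)%N; rewrite ?andbF ?andbT //; exact: (fsubsetP TS x xT).
Qed.

Lemma kcount_le S : (kcount S <= k)%N.
Proof.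
have sub : {subset [fset i in S | (i < k)%N] <= iota 0 k}.
  by move=> x; rewrite !inE /= mem_iota add0n => /andP[].
by have := uniq_leq_size (fset_uniq _) sub; rewrite size_iota.
Qed.

Lemma kcount_ge_add n a b : kcount_ge n a -> kcount_ge n b -> kcount_ge n (Gr_add a b).
Proof.
move=> Ha Hb S; rewrite /Gr_add; case: (eqVneq (a S) 0) => [->|aS _]; last exact: Ha.
by rewrite add0r => /Hb.
Qed.

Lemma kcount_ge_mul n m a b :
  kcount_ge n a -> kcount_ge m b -> kcount_ge (n + m) (Gr_mul a b).
Proof.
move=> Ha Hb S; apply: contraR; rewrite -ltnNge => lt.
rewrite /Gr_mul big_seq big1 // => T; rewrite fpowersetE => TS.
case: (eqVneq (a T) 0) => [->|aT]; first by rewrite mulr0 mul0r.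
case: (eqVneq (b (S `\` T)) 0) => [->|bT]; first by rewrite mulr0.
by have := leq_add (Ha _ aT) (Hb _ bT); rewrite -(kcount_sub TS) leqNgt lt.
Qed.

Lemma kcount_ge_odd a : Gr_hom k true a -> kcount_ge 1 a.
Proof. by move=> [_ odd_a] S /odd_a; rewrite /degk -/(kcount S); case: (kcount S). Qed.

Lemma kcount_ge_eq0 a : kcount_ge k.+1 a -> a = @Gr_zero F.
Proof.
move=> Ha; apply: functional_extensionality => S; apply/eqP; apply: contraT => aS.
by have := Ha S aS; rewrite ltnNge kcount_le.
Qed.

Lemma eval_odd_word_UT (phi : var -> UT F) w :
  graded_subst (A := Rk F k) phi -> all (fun x => x.1) w ->
  let M := eval_word (A := Rk F k) phi w in
  [/\ kcount_ge (size w) M.1.1, kcount_ge (size w) M.1.2 & kcount_ge (size w) M.2].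
Proof.
move=> gphi; elim: w => [|x w IH] /=; first by split.
case/andP => x1 /IH [H11 H12 H22]; rewrite -add1n.
have := gphi x; rewrite /= x1.
case: (phi x) => [[a b] c] [/kcount_ge_odd Ha /kcount_ge_odd Hb /kcount_ge_odd Hc].
move: (eval_word _ w) H11 H12 H22 => [[a' b'] c'] /= H11 H12 H22.
by split; try apply: kcount_ge_add; exact: kcount_ge_mul.
Qed.

Definition odd_word : word := [seq (true, i) | i <- iota 0 k.+1].

Lemma odd_monomial_TZ2_UT : TZ2 (Rk F k) (monomial F odd_word).
Proof.
apply: (monomial_TZ2 (UT_coord_alg F k)) => phi gphi.
have [] := eval_odd_word_UT gphi (w := odd_word); first by rewrite all_map; apply/allP.
rewrite size_map size_iota.
by case: (eval_word _ _) => [[a b] c] /= /kcount_ge_eq0 -> /kcount_ge_eq0 -> /kcount_ge_eq0 ->.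
Qed.

Definition Gr_basis U : Gr F := fun S => if S == U then 1 else 0.

Lemma Gr_hom_zero g : Gr_hom k g (@Gr_zero F).
Proof. by split=> [|S]; [exists [::] | rewrite eqxx]. Qed.

Lemma Gr_hom_generator j : (j < k)%N -> Gr_hom k true (Gr_basis [fset j]).
Proof.
move=> jk; split=> [|S]; first by exists [:: [fset j]] => S; rewrite inE /Gr_basis => /negbTE ->.
rewrite /Gr_basis; case: (eqVneq S [fset j]) => [-> _|]; last by rewrite eqxx.
rewrite /degk (_ : [fset i in [fset j] | (i < k)%N] = [fset j]) ?cardfs1 //.
by apply/fsetP => x; rewrite !inE /=; case: eqP => // ->.
Qed.

Lemma Gr_mul_generator_basis j U : (forall u, u \in U -> (j < u)%N) ->
  Gr_mul (Gr_basis [fset j]) (Gr_basis U) = Gr_basis (j |` U).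
Proof.
move=> jU; have jnU : j \notin U by apply/negP => /jU; rewrite ltnn.
have jUj : (j |` U) `\` [fset j] = U.
  by apply/fsetP => x; rewrite !inE /=; case: eqP => [->|] //=; rewrite (negbTE jnU).
apply: functional_extensionality => S; rewrite /Gr_mul /Gr_basis.
case: (boolP (j \in S)) => jS; last first.
  rewrite big1_seq; first by case: eqP => // SjU; rewrite SjU fset1U1 in jS.
  move=> T; rewrite fpowersetE => /andP[_ TS].
  case: eqP => [Tj|]; last by rewrite mulr0 mul0r.
  by move: jS; rewrite (fsubsetP TS) // Tj fset11.
rewrite (big_fsetD1 [fset j]) /=; last by rewrite fpowersetE fsub1set.
rewrite eqxx mulr1 big1_fset ?addr0; last first.
  by move=> T; rewrite !inE => /andP[/negbTE -> _] _; rewrite mulr0 mul0r.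
have -> : (S `\` [fset j] == U) = (S == j |` U).
  apply/eqP/eqP => [<-|->] //; apply/fsetP => x; rewrite !inE /=.
  by case: eqP => [->|] //=; rewrite andbT.
case: eqP => [->|]; last by rewrite mulr0.
(* no element of U is below j, so e_j e_U involves no transposition *)
rewrite jUj mulr1 /ninv big_seq_fset1 (_ : [fset i in U | (i < j)%N] = fset0) ?cardfs0 //.
apply/fsetP => x; rewrite !inE /=; case xU: (x \in U) => //=.
by rewrite ltnNge ltnW // jU.
Qed.

Definition witness_subst (x : var) : UT F :=
  if x.1 then
    if x.2 == 0%N then (@Gr_zero F, @Gr_one F, @Gr_zero F)
    else if (x.2 <= k)%N then (@Gr_zero F, @Gr_zero F, Gr_basis [fset x.2.-1])
    else UT_zero F
  else UT_zero F.

Lemma witness_subst_diag_graded :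
  graded_subst (A := Ek F k) (fun x => (witness_subst x).1.1) /\
  graded_subst (A := Ek F k) (fun x => (witness_subst x).2).
Proof.
split=> -[[] [|i]]; rewrite /witness_subst /=; try case: ifP => ik /=;
  first [exact: Gr_hom_zero | exact: Gr_hom_generator].
Qed.

Lemma eval_witness_tail j n : (j + n <= k)%N ->
  eval_word (A := Ek F k) (fun x => (witness_subst x).2) [seq (true, i) | i <- iota j.+1 n]
  = Gr_basis [fset x in iota j n].
Proof.
elim: n j => [|n IH] j jnk /=.
  apply: functional_extensionality => S; rewrite /Gr_one /Gr_basis.
  by rewrite (_ : [fset x in [::]] = fset0) //; apply/fsetP => x; rewrite !inE.
have jk : (j < k)%N by apply: leq_trans jnk; rewrite addnS ltnS leq_addr.
have -> : (witness_subst (true, j.+1)).2 = Gr_basis [fset j] by rewrite /witness_subst /= jk.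
rewrite IH ?addSnnS //.
rewrite Gr_mul_generator_basis => [|u]; last by rewrite !inE /= mem_iota => /andP[].
by congr Gr_basis; apply/fsetP => x; rewrite !inE.
Qed.

Lemma eval_witness_odd_word :
  (eval_word (A := Rk F k) witness_subst odd_word).1.2 = Gr_basis [fset x in iota 0 k].
Proof.
set tail := [seq (true, i) | i <- iota 1 k].
have -> : eval_word (A := Rk F k) witness_subst odd_word =
  UT_mul (witness_subst (true, 0%N)) (eval_word (A := Rk F k) witness_subst tail) by [].
have := eval_word_UT22 k witness_subst tail.
rewrite eval_witness_tail //; case: (eval_word _ _) => [[a b] c] /= ->.
by rewrite Gr_mul0l Gr_mul1l Gr_add0r.
Qed.

Lemma odd_monomial_notin_ideal_prod :
  ~ ideal_prod (TZ2 (Ek F k)) (TZ2 (Ek F k)) (monomial F odd_word).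
Proof.
move=> Ih; have [g11 g22] := witness_subst_diag_graded.
have cz : covers [:: odd_word] (monomial F odd_word).
  by split=> // w; rewrite inE /monomial => /negbTE ->.
have := eval_ideal_prod_UT g11 g22 Ih cz.
rewrite (eval_monomial (UT_coord_alg F k)) ?mem_head //.
move=> /(congr1 (fun M : UT F => M.1.2 [fset x in iota 0 k])).
by rewrite eval_witness_odd_word /Gr_basis eqxx /= => /eqP; rewrite oner_eq0.
Qed.

End OddMonomial.

Theorem proposition7p2 (F : fieldType) (hF : [pchar F]%R =i pred0)
  (k : nat) (hk : (0 < k)%N) :
  (forall h : fpoly F, ideal_prod (TZ2 (Ek F k)) (TZ2 (Ek F k)) h ->
                       TZ2 (Rk F k) h) /\
  (exists h : fpoly F, TZ2 (Rk F k) h /\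
                       ~ ideal_prod (TZ2 (Ek F k)) (TZ2 (Ek F k)) h).
Proof.
split; first exact: ideal_prod_sub_TZ2_UT.
exists (monomial F (odd_word k)).
split; [exact: odd_monomial_TZ2_UT | exact: odd_monomial_notin_ideal_prod].
Qed.
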